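(* Let $\pi\triangleright\Gamma\vdash^{(m,e)} t:\mathtt{n}$ be a derivation in the silly multi type system. (1) If $t\to_{ym} u$ then $m\geq1$ and there is a derivation $\rho\triangleright\Gamma\vdash^{(m-1,e)}u:\mathtt{n}$. (2) If $t\to_{yeAY}u$ or $t\to_{yeYN}u$ then $e\geq 1$ and there is a derivation $\rho\triangleright\Gamma\vdash^{(m,e-1)}u:\mathtt{n}$.
   Context: Terms: $t ::= x \mid \lambda x.t \mid t\,u \mid t[x\backslash u]$ ($t[x\backslash u]$ an explicit substitution binding $x$ in $t$; terms up to $\alpha$). Values $v ::= \lambda x.t$. Substitution contexts $S ::= \langle\cdot\rangle\mid S[x\backslash u]$. For a class of contexts $K$, $K\langle\langle t\rangle\rangle$ is plugging without capture of free variables of $t$. Root rules: $S\langle\lambda x.t\rangle u\mapsto_m S\langle t[x\backslash u]\rangle$; $K\langle\langle x\rangle\rangle[x\backslash u]\mapsto_{e_K} K\langle\langle u\rangle\rangle[x\backslash u]$. Answers $a ::= v\mid a[x\backslash a']$; name contexts $N ::= \langle\cdot\rangle\mid N t\mid N[x\backslash t]$; auxiliary contexts $A ::= \langle\cdot\rangle\mid a[x\backslash A]\mid A[x\backslash t]$; silly contexts $Y ::= A\langle N\rangle$. $\to_{ym} := Y\langle\mapsto_m\rangle$; $\to_{yeAY} := A\langle\mapsto_{e_Y}\rangle$; $\to_{yeYN} := Y\langle\mapsto_{e_N}\rangle$. Silly multi types: linear types $L ::= \mathtt{n} \mid M\multimap L$; multi types $M ::= [L_i]_{i\in I}$ finite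 multisets ($\mathbf{0}$ empty, $\uplus$ sum). Type contexts $\Gamma$ map variables to multi types with finite support; $\uplus$ pointwise; $\Gamma\setminus\!\!\setminus x$ sets $x$ to $\mathbf{0}$. Rules: (ax) $x:[L]\vdash^{(0,1)} x:L$; (many) from $(\Gamma_i\vdash^{(m_i,e_i)} t : L_i)_{i\in I}$, $I$ finite possibly empty, infer $\uplus_i\Gamma_i\vdash^{(\sum m_i,\sum e_i)} t : [L_i]_{i\in I}$; ($\mathrm{ax}_\lambda$) $\vdash^{(0,0)}\lambda x.t:\mathtt{n}$; ($\lambda$) from $\Gamma\vdash^{(m,e)}t:L$ infer $\Gamma\setminus\!\!\setminus x\vdash^{(m,e)}\lambda x.t:\Gamma(x)\multimap L$; (@) from $\Gamma\vdash^{(m,e)} t : M\multimap L$ and $\Delta\vdash^{(m',e')} u : M\uplus[\mathtt{n}]$ infer $\Gamma\uplus\Delta\vdash^{(m+m'+1,e+e')} tu : L$; (ES) from $\Gamma\vdash^{(m,e)} t:L$ and $\Delta\vdash^{(m',e')}u:\Gamma(x)\uplus[\mathtt{n}]$ infer $(\Gamma\setminus\!\!\setminus x)\uplus\Delta\vdash^{(m+m',e+e')} t[x\backslash u]:L$. *)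

From mathcomp Require Import all_boot.
Set Implicit Arguments. Unset Strict Implicit. Unset Printing Implicit Defensive.

(* Terms, in de Bruijn notation (canonical representatives of alpha-   *)
(* classes).  [Lam t] binds index 0 in t; [ES t u] = t[x\u] binds      *)
(* index 0 in t (not in u).                                            *)
Inductive term : Type :=
| Var : nat -> term
| Lam : term -> term
| App : term -> term -> term
| ES  : term -> term -> term.

Fixpoint lift (k c : nat) (t : term) : term :=
  match t with
  | Var i => if c <= i then Var (i + k) else Var i
  | Lam t1 => Lam (lift k c.+1 t1)
  | App t1 t2 => App (lift k c t1) (lift k c t2)
  | ES t1 t2 => ES (lift k c.+1 t1) (lift k c t2)
  end.

Definition is_value (t : term) : bool := if t is Lam _ then true else false.
Fixpoint is_answer (t : term) : bool :=
  match t with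
  | Lam _ => true
  | ES a a' => is_answer a && is_answer a'
  | _ => false
  end.

(* Substitution contexts S ::= <.> | S[x\u]; the list head is the     *)
Fixpoint plugS (S : seq term) (t : term) : term :=
  match S with
  | [::] => t
  | u :: S' => ES (plugS S' t) u
  end.

Inductive nctx : Type :=
| NHole : nctx
| NApp : nctx -> term -> nctx
| NES : nctx -> term -> nctx.

Fixpoint plugN (N : nctx) (t : term) : term :=
  match N with
  | NHole => t
  | NApp N' u => App (plugN N' t) u
  | NES N' u => ES (plugN N' t) u
  end.

Fixpoint bindN (N : nctx) : nat :=
  match N with
  | NHole => 0
  | NApp N' _ => bindN N'
  | NES N' _ => (bindN N').+1
  end.

Inductive actx : Type :=
| AHole : actx
| AArg : term -> actx -> actx
| AES : actx -> term -> actx.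

Fixpoint wfA (A : actx) : bool :=
  match A with
  | AHole => true
  | AArg a A' => is_answer a && wfA A'
  | AES A' _ => wfA A'
  end.

Fixpoint plugA (A : actx) (t : term) : term :=
  match A with
  | AHole => t
  | AArg a A' => ES a (plugA A' t)
  | AES A' u => ES (plugA A' t) u
  end.

Fixpoint bindA (A : actx) : nat :=
  match A with
  | AHole => 0
  | AArg _ A' => bindA A'
  | AES A' _ => (bindA A').+1
  end.

Definition plugY (A : actx) (N : nctx) (t : term) : term := plugA A (plugN N t).
Definition bindY (A : actx) (N : nctx) : nat := bindA A + bindN N.

Definition root_m (t u : term) : Prop :=
  exists (S : seq term) (b w : term),
    t = App (plugS S (Lam b)) w /\ u = plugS S (ES b (lift (size S) 0 w)).

(* Root rule e_N:  N<<x>>[x\u] |-> N<<u>>[x\u]; the hole variable refers *)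
(* to the outer ES binder (i.e. is not captured by N), and u is lifted *)
(* over the binders (no capture of its free variables).                *)
Definition root_eN (t u : term) : Prop :=
  exists (N : nctx) (w : term),
    t = ES (plugN N (Var (bindN N))) w /\
    u = ES (plugN N (lift (bindN N).+1 0 w)) w.

Definition root_eY (t u : term) : Prop :=
  exists (A : actx) (N : nctx) (w : term),
    wfA A /\
    t = ES (plugY A N (Var (bindY A N))) w /\
    u = ES (plugY A N (lift (bindY A N).+1 0 w)) w.

Definition ym (t u : term) : Prop :=
  exists (A : actx) (N : nctx) (t0 u0 : term),
    wfA A /\ root_m t0 u0 /\ t = plugY A N t0 /\ u = plugY A N u0.

Definition yeAY (t u : term) : Prop :=
  exists (A : actx) (t0 u0 : term),
    wfA A /\ root_eY t0 u0 /\ t = plugA A t0 /\ u = plugA A u0.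

Definition yeYN (t u : term) : Prop :=
  exists (A : actx) (N : nctx) (t0 u0 : term),
    wfA A /\ root_eN t0 u0 /\ t = plugY A N t0 /\ u = plugY A N u0.

(* Silly multi types.  Multisets are represented canonically as lists *)
(* sorted by a total (lexicographic) order [ltype_le].                 *)
Inductive ltype : Type :=
| tn : ltype
| tarr : seq ltype -> ltype -> ltype.

Notation mtype := (seq ltype).

Fixpoint lcmp (a b : ltype) {struct a} : comparison :=
  match a, b with
  | tn, tn => Eq
  | tn, tarr _ _ => Lt
  | tarr _ _, tn => Gt
  | tarr M L, tarr M' L' =>
      let fix lcmpl (l1 l2 : seq ltype) {struct l1} : comparison :=
        match l1, l2 with
        | [::], [::] => Eq
        | [::], _ :: _ => Lt
        | _ :: _, [::] => Gt
        | x :: xs, y :: ys =>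
            match lcmp x y with Eq => lcmpl xs ys | c => c end
        end in
      match lcmpl M M' with Eq => lcmp L L' | c => c end
  end.

Definition ltype_le (a b : ltype) : bool :=
  if lcmp a b is Gt then false else true.

Definition munion (M N : mtype) : mtype := sort ltype_le (M ++ N).

Fixpoint wfT (L : ltype) : bool :=
  match L with
  | tn => true
  | tarr M L' => sorted ltype_le M && all wfT M && wfT L'
  end.

Definition ctx := nat -> mtype.
Definition cempty : ctx := fun _ => [::].
Definition csing (x : nat) (L : ltype) : ctx :=
  fun y => if y == x then [:: L] else [::].
Definition cunion (G D : ctx) : ctx := fun y => munion (G y) (D y).
(* Gamma \\ x for the binder x = index 0, then removal of that binder *)
Definition ctail (G : ctx) : ctx := fun y => G y.+1.

(* typed G m e t L  :  G |-^(m,e) t : L *)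
Inductive typed : ctx -> nat -> nat -> term -> ltype -> Prop :=
| ty_ax x L : wfT L -> typed (csing x L) 0 1 (Var x) L
| ty_axl t : typed cempty 0 0 (Lam t) tn
| ty_lam G m e t L :
    typed G m e t L -> typed (ctail G) m e (Lam t) (tarr (G 0) L)
| ty_app G D m e m' e' t u M L :
    typed G m e t (tarr M L) ->
    mtyped D m' e' u (munion M [:: tn]) ->
    typed (cunion G D) (m + m' + 1) (e + e') (App t u) L
| ty_es G D m e m' e' t u L :
    typed G m e t L ->
    mtyped D m' e' u (munion (G 0) [:: tn]) ->
    typed (cunion (ctail G) D) (m + m') (e + e') (ES t u) L
(* rule (many), for a finite family, built up one element at a time *)
with mtyped : ctx -> nat -> nat -> term -> mtype -> Prop :=
| mty_nil t : mtyped cempty 0 0 t [::]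
| mty_cons G D m e m' e' t L M :
    typed G m e t L -> mtyped D m' e' t M ->
    mtyped (cunion G D) (m + m') (e + e') t (munion [:: L] M).

(* A derivation of Y<r> : n factors through a derivation of the redex r. Name
   contexts expose their hole directly; in an auxiliary context a[x\A] the answer a is
   typed by n with an empty type context, so the substitution types A<r> by exactly
   one derivation, again of type n. The rest of the derivation accepts any other
   derivation of the hole with the same type, so it suffices to reduce at the root.
   There a multiplicative step turns the (@) rule consuming S<\x.t> into an (ES) rule,
   losing exactly one m; an exponential step replaces the (ax) leaf x : L by the
   derivation of u : L taken out of the multiset typing u in the substitution
   (weakened under the binders between them), losing exactly one e. *)

From HB Require Import structures.
From mathcomp Require Import all_boot zify.
From Stdlib Require Import FunctionalExtensionality.
From Stdlib Require List.

Set Implicit Arguments. Unset Strict Implicit. Unset Printing Implicit Defensive.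

(* [munion] sorts with [ltype_le]; identifying contexts that agree up to permutation
   requires it to be a total order. *)
Definition lexl (T : Type) (f : T -> T -> comparison) :=
  fix lexl (s1 s2 : seq T) {struct s1} : comparison :=
    match s1, s2 with
    | [::], [::] => Eq
    | [::], _ :: _ => Lt
    | _ :: _, [::] => Gt
    | x :: xs, y :: ys => match f x y with Eq => lexl xs ys | c => c end
    end.

Lemma lcmp_tarr M L M' L' :
  lcmp (tarr M L) (tarr M' L') = match lexl lcmp M M' with Eq => lcmp L L' | c => c end.
Proof. by []. Qed.

Section Lexicographic.
Variables (T : Type) (f : T -> T -> comparison).

Lemma lexl_sym s1 s2 :
  List.Forall (fun x => forall y, f y x = CompOpp (f x y)) s1 ->
  lexl f s2 s1 = CompOpp (lexl f s1 s2).
Proof.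
elim: s1 s2 => [|x xs IH] [|y ys] //= /List.Forall_cons_iff [-> /IH {}IH].
by case: (f x y) => //=; apply: IH.
Qed.

Lemma lexl_eq s1 s2 :
  List.Forall (fun x => forall y, f x y = Eq -> x = y) s1 ->
  lexl f s1 s2 = Eq -> s1 = s2.
Proof.
elim: s1 s2 => [|x xs IH] [|y ys] //= /List.Forall_cons_iff [f_eq /IH {}IH].
by case E: (f x y) => // /IH ->; rewrite (f_eq _ E).
Qed.

Hypothesis f_eq : forall x y, f x y = Eq -> x = y.

Lemma lexl_trans s1 s2 s3 :
  List.Forall (fun x => forall y z, f x y = Lt -> f y z = Lt -> f x z = Lt) s1 ->
  lexl f s1 s2 = Lt -> lexl f s2 s3 = Lt -> lexl f s1 s3 = Lt.
Proof.
elim: s1 s2 s3 => [|x xs IH] [|y ys] [|z zs] //= /List.Forall_cons_iff [f_trans /IH {}IH].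
case E1: (f x y) => //; case E2: (f y z) => //.
- by move: (f_eq E1) (f_eq E2) => ??; subst; rewrite E1; exact: IH.
- by move: (f_eq E1) => ?; subst; rewrite E2.
- by move: (f_eq E2) => ?; subst; rewrite E1.
- by rewrite (f_trans _ _ E1 E2).
Qed.

End Lexicographic.

Fixpoint ltype_nested_ind (P : ltype -> Prop) (Pn : P tn)
    (Parr : forall M L, List.Forall P M -> P L -> P (tarr M L)) (L : ltype) : P L :=
  match L with
  | tn => Pn
  | tarr M L' =>
      Parr M L'
        ((fix all_ind (M : seq ltype) : List.Forall P M :=
            match M with
            | [::] => List.Forall_nil P
            | x :: xs => List.Forall_cons x (ltype_nested_ind Pn Parr x) (all_ind xs)
            end) M)
        (ltype_nested_ind Pn Parr L')
  end.

Lemma lcmp_sym a b : lcmp b a = CompOpp (lcmp a b).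
Proof.
elim/ltype_nested_ind: a b => [|M L IHM IHL] [|M' L'] //.
by rewrite !lcmp_tarr (lexl_sym _ IHM); case: (lexl lcmp M M') => //=.
Qed.

Lemma lcmp_refl a : lcmp a a = Eq.
Proof. by have := lcmp_sym a a; case: (lcmp a a). Qed.

Lemma lcmp_eq a b : lcmp a b = Eq -> a = b.
Proof.
elim/ltype_nested_ind: a b => [|M L IHM IHL] [|M' L'] //.
by rewrite lcmp_tarr; case E: (lexl lcmp M M') => // /IHL ->; rewrite (lexl_eq IHM E).
Qed.

Lemma lexl_lcmp_eq M M' : lexl lcmp M M' = Eq -> M = M'.
Proof. by apply: lexl_eq; apply/List.Forall_forall => x _; apply: lcmp_eq. Qed.

Lemma lcmp_trans a b c : lcmp a b = Lt -> lcmp b c = Lt -> lcmp a c = Lt.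
Proof.
elim/ltype_nested_ind: a b c => [|M L IHM IHL] [|M1 L1] [|M2 L2] //.
rewrite !lcmp_tarr.
case E1: (lexl lcmp M M1) => //; case E2: (lexl lcmp M1 M2) => //.
- by move: (lexl_lcmp_eq E1) (lexl_lcmp_eq E2) => ??; subst; rewrite E1; apply: IHL.
- by move: (lexl_lcmp_eq E1) => ?; subst; rewrite E2.
- by move: (lexl_lcmp_eq E2) => ?; subst; rewrite E1.
- by rewrite (lexl_trans lcmp_eq IHM E1 E2).
Qed.

Definition ltype_eqb a b := if lcmp a b is Eq then true else false.

Lemma ltype_eqP : Equality.axiom ltype_eqb.
Proof.
move=> a b; rewrite /ltype_eqb; case E: (lcmp a b); constructor.
- exact: lcmp_eq.
- by move=> eq_ab; move: E; rewrite eq_ab lcmp_refl.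
- by move=> eq_ab; move: E; rewrite eq_ab lcmp_refl.
Qed.

HB.instance Definition _ := hasDecEq.Build ltype ltype_eqP.

Lemma ltype_le_total : total ltype_le.
Proof. by move=> a b; rewrite /ltype_le (lcmp_sym a b); case: (lcmp a b). Qed.

Lemma ltype_le_trans : transitive ltype_le.
Proof.
move=> b a c; rewrite /ltype_le.
case E1: (lcmp a b) => //; case E2: (lcmp b c) => //.
- by rewrite (lcmp_eq E1) E2.
- by rewrite (lcmp_eq E1) E2.
- by rewrite -(lcmp_eq E2) E1.
- by rewrite (lcmp_trans E1 E2).
Qed.

Lemma ltype_le_anti : antisymmetric ltype_le.
Proof.
move=> a b; rewrite /ltype_le (lcmp_sym a b).
by case E: (lcmp a b) => //= _; apply: lcmp_eq.
Qed.

Definition ctx_sorted (G : ctx) := forall y, sorted ltype_le (G y).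
Definition ctx_perm (G G' : ctx) := forall y, perm_eq (G y) (G' y).

Lemma munion_sorted M N : sorted ltype_le (munion M N).
Proof. exact: sort_sorted ltype_le_total _. Qed.

Lemma sort_perm_eq s1 s2 : perm_eq s1 s2 -> sort ltype_le s1 = sort ltype_le s2.
Proof. by move/(perm_sortP ltype_le_total ltype_le_trans ltype_le_anti). Qed.

Lemma count_cunion p G D y : count p (cunion G D y) = count p (G y) + count p (D y).
Proof. by rewrite /cunion /munion count_sort count_cat. Qed.

Lemma ctx_sorted_eq G G' : ctx_sorted G -> ctx_sorted G' -> ctx_perm G G' -> G = G'.
Proof.
move=> sG sG' pG; apply: functional_extensionality => y.
exact: (sorted_eq ltype_le_trans ltype_le_anti (sG y) (sG' y) (pG y)).
Qed.

Scheme typed_mind := Induction for typed Sort Prop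
  with mtyped_mind := Induction for mtyped Sort Prop.
Combined Scheme typed_mtyped_ind from typed_mind, mtyped_mind.

Lemma typed_mtyped_sorted :
  (forall G m e t L, typed G m e t L -> ctx_sorted G) /\
  (forall D m e t M, mtyped D m e t M -> ctx_sorted D /\ sorted ltype_le M).
Proof.
apply (@typed_mtyped_ind (fun G m e t L _ => ctx_sorted G)
                         (fun D m e t M _ => ctx_sorted D /\ sorted ltype_le M)).
- by move=> x L _ y; rewrite /csing; case: (y == x).
- by [].
- by move=> G m e t L _ sG y; apply: sG.
- by move=> * y; apply: munion_sorted.
- by move=> * y; apply: munion_sorted.
- by [].
- by move=> *; split; [move=> y|]; apply: munion_sorted.
Qed.

Lemma typed_sorted G m e t L : typed G m e t L -> ctx_sorted G.
Proof. exact: (proj1 typed_mtyped_sorted). Qed.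

Lemma mtyped_sorted D m e t M : mtyped D m e t M -> sorted ltype_le M.
Proof. by move/(proj2 typed_mtyped_sorted) => []. Qed.

Lemma typed_conv G G' m m' e e' t L :
  typed G m e t L -> m = m' -> e = e' -> ctx_perm G G' -> ctx_sorted G' -> typed G' m' e' t L.
Proof. by move=> HG <- <- pG sG'; rewrite -(ctx_sorted_eq (typed_sorted HG) sG' pG). Qed.

Definition cshift (k c : nat) (G : ctx) : ctx :=
  fun y => if y < c then G y else if y < c + k then [::] else G (y - k).

Lemma cshift_cunion k c G D : cshift k c (cunion G D) = cunion (cshift k c G) (cshift k c D).
Proof.
by apply: functional_extensionality => y; rewrite /cshift /cunion; case: ifP => //; case: ifP.
Qed.

Lemma cshift_cempty k c : cshift k c cempty = cempty.
Proof. by apply: functional_extensionality => y; rewrite /cshift; case: ifP => //; case: ifP. Qed.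

Lemma cshift_ctail k c G : ctail (cshift k c.+1 G) = cshift k c (ctail G).
Proof.
apply: functional_extensionality => y; rewrite /cshift /ctail ltnS addSn ltnS.
by case: ifP => // _; case: ifP => // le_cky; congr G; lia.
Qed.

Lemma cshift_csing k c x L :
  cshift k c (csing x L) = csing (if c <= x then x + k else x) L.
Proof.
apply: functional_extensionality => y; rewrite /cshift /csing.
case: (leqP c x) => le_cx; case: (ltnP y c) => lt_yc //=;
  try case: (ltnP y (c + k)) => ? //=; repeat case: eqP => ? //; lia.
Qed.

Lemma typed_mtyped_lift :
  (forall G m e t L, typed G m e t L ->
     forall k c, typed (cshift k c G) m e (lift k c t) L) /\
  (forall D m e t M, mtyped D m e t M ->
     forall k c, mtyped (cshift k c D) m e (lift k c t) M).
Proof.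
apply (@typed_mtyped_ind
  (fun G m e t L _ => forall k c, typed (cshift k c G) m e (lift k c t) L)
  (fun D m e t M _ => forall k c, mtyped (cshift k c D) m e (lift k c t) M)).
- by move=> x L wL k c; rewrite cshift_csing /=; case: ifP => _; apply: ty_ax.
- by move=> t k c; rewrite cshift_cempty; apply: ty_axl.
- move=> G m e t L _ IH k c; rewrite /= -cshift_ctail.
  exact: (ty_lam (IH k c.+1)).
- move=> G D m e m' e' t u M L _ IHt _ IHu k c; rewrite cshift_cunion.
  exact: ty_app (IHt k c) (IHu k c).
- move=> G D m e m' e' t u L _ IHt _ IHu k c; rewrite cshift_cunion -cshift_ctail.
  exact: ty_es (IHt k c.+1) (IHu k c).
- by move=> t k c; rewrite cshift_cempty; apply: mty_nil.
- move=> G D m e m' e' t L M _ IHt _ IHM k c; rewrite cshift_cunion.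
  exact: mty_cons (IHt k c) (IHM k c).
Qed.

Lemma typed_lift k c G m e t L : typed G m e t L -> typed (cshift k c G) m e (lift k c t) L.
Proof. by move/(proj1 typed_mtyped_lift); apply. Qed.

Lemma mtyped_lift k c D m e t M : mtyped D m e t M -> mtyped (cshift k c D) m e (lift k c t) M.
Proof. by move/(proj2 typed_mtyped_lift); apply. Qed.

Lemma liftD k j c t : lift k c (lift j c t) = lift (k + j) c t.
Proof.
elim: t c => [i|t IH|t1 IH1 t2 IH2|t1 IH1 t2 IH2] c /=; rewrite ?IH ?IH1 ?IH2 //.
case: ifP => le_ci /=; rewrite ?le_ci // ifT; [congr Var | ]; lia.
Qed.

Lemma lift0 c t : lift 0 c t = t.
Proof.
by elim: t c => [i|t IH|t1 IH1 t2 IH2|t1 IH1 t2 IH2] c /=; rewrite ?IH ?IH1 ?IH2 ?addn0 //; case: ifP.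
Qed.

Lemma inv_app G m e t u L : typed G m e (App t u) L -> exists G1 D m1 e1 m2 e2 M,
  [/\ typed G1 m1 e1 t (tarr M L), mtyped D m2 e2 u (munion M [:: tn]),
      G = cunion G1 D, m = m1 + m2 + 1 & e = e1 + e2].
Proof. by move=> H; inversion H; subst; do 7 eexists; split; eauto. Qed.

Lemma inv_es G m e t u L : typed G m e (ES t u) L -> exists G1 D m1 e1 m2 e2,
  [/\ typed G1 m1 e1 t L, mtyped D m2 e2 u (munion (G1 0) [:: tn]),
      G = cunion (ctail G1) D, m = m1 + m2 & e = e1 + e2].
Proof. by move=> H; inversion H; subst; do 6 eexists; split; eauto. Qed.

Lemma inv_lam_tarr G m e t M L : typed G m e (Lam t) (tarr M L) ->
  exists Gt, [/\ typed Gt m e t L, G = ctail Gt & M = Gt 0].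
Proof. by move=> H; inversion H; subst; eexists; split; eauto. Qed.

Lemma inv_lam_tn G m e t : typed G m e (Lam t) tn -> [/\ G = cempty, m = 0 & e = 0].
Proof. by move=> H; inversion H. Qed.

Lemma inv_var G m e x L : typed G m e (Var x) L -> [/\ G = csing x L, m = 0 & e = 1].
Proof. by move=> H; inversion H. Qed.

Lemma inv_mtyped_nil D m e t : mtyped D m e t [::] -> [/\ D = cempty, m = 0 & e = 0].
Proof.
move=> H; remember [::] as M0 eqn:eM; case: H eM => [t'|G D' m1 e1 m2 e2 t' L M _ _] eM //.
by move: (congr1 size eM); rewrite size_sort.
Qed.

Lemma inv_mtyped_single D m e t L : mtyped D m e t [:: L] -> typed D m e t L.
Proof.
move=> H; remember [:: L] as M0 eqn:eM.
case: H eM => [t'|G D' m1 e1 m2 e2 t' L' M HL HM] eM //.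
have M_nil : M = [::] by move: (congr1 size eM); rewrite size_sort; case: (M).
move: eM HM; rewrite M_nil => -[<-] /inv_mtyped_nil [-> -> ->].
rewrite !addn0; apply: typed_conv HL erefl erefl _ _ => y; last exact: munion_sorted.
by rewrite /cunion /munion cats0 perm_sym perm_sort.
Qed.

Lemma typed_answer_tn_cempty a G m e : is_answer a -> typed G m e a tn -> G = cempty.
Proof.
elim: a G m e => [i|t _|t1 _ t2 _|a1 IH1 a2 IH2] //= G m e; first by move=> _ /inv_lam_tn [].
case/andP=> ans1 ans2 /inv_es [G1 [D [m1 [e1 [m2 [e2 [H1 H2 -> _ _]]]]]]].
move: H2; rewrite (IH1 _ _ _ ans1 H1) => /inv_mtyped_single /(IH2 _ _ _ ans2) ->.
by apply: functional_extensionality.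
Qed.

Lemma mtyped_extract D m e t M L R : mtyped D m e t M -> perm_eq M (L :: R) ->
  exists GL mL eL D' m' e',
    [/\ typed GL mL eL t L, mtyped D' m' e' t (sort ltype_le R),
        ctx_perm D (fun y => GL y ++ D' y), m = mL + m' & e = eL + e'].
Proof.
move=> H; elim: H L R => [t0|G0 D0 m0 e0 m0' e0' t0 L0 M0 HL0 HM0 IH] L R pM.
  by move: (perm_size pM).
have pM' : perm_eq (L0 :: M0) (L :: R) by rewrite -(perm_sort ltype_le).
have [eL|neL] := eqVneq L0 L.
  subst L0; have pMR : perm_eq M0 R by rewrite -(perm_cons L).
  have -> : sort ltype_le R = M0.
    apply: (sorted_eq ltype_le_trans ltype_le_anti); rewrite ?(mtyped_sorted HM0) //.
      exact: sort_sorted ltype_le_total _.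
    by rewrite perm_sort perm_sym.
  exists G0, m0, e0, D0, m0', e0'; split => // y.
  by apply/permP => p; rewrite count_cunion count_cat.
have L_M0 : L \in M0.
  have : L \in L0 :: M0 by rewrite (perm_mem pM') mem_head.
  by rewrite inE eq_sym (negbTE neL).
have pMrem := perm_to_rem L_M0.
have [GL [mL [eL [D1 [m1 [e1 [HL HD1 pD -> ->]]]]]]] := IH _ _ pMrem.
exists GL, mL, eL, (cunion G0 D1), (m0 + m1), (e0 + e1); split => //; try lia.
  have -> : sort ltype_le R = munion [:: L0] (sort ltype_le (rem L M0)).
    apply: sort_perm_eq; apply/permP => p.
    move/permP: pM' => /(_ p); move/permP: pMrem => /(_ p).
    rewrite /= count_sort /=; lia.
  exact: mty_cons HL0 HD1.
move=> y; apply/permP => p; move/permP: (pD y) => /(_ p).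
by rewrite !count_cunion !count_cat count_cunion => ->; rewrite addnCA.
Qed.

(* The derivation of [C<X> : T] in [G] split into a derivation of [X : L] in [GX] and
   the part [F, mF, eF] contributed by [C]; [k] counts the binders of [C] above its
   hole, so the free index [y] of [C<X>] is the index [y + k] of [X]. *)
Definition frame (C : term -> term) (k : nat) (G : ctx) (m e : nat) (T : ltype)
    (GX : ctx) (mX eX : nat) (L : ltype) : Prop :=
  exists (F : ctx) (mF eF : nat),
    [/\ m = mF + mX, e = eF + eX, ctx_perm G (fun y => F y ++ GX (y + k)) &
        forall Y GY mY eY G', typed GY mY eY Y L -> (forall y, y < k -> GY y = GX y) ->
          ctx_sorted G' -> ctx_perm G' (fun y => F y ++ GY (y + k)) ->
          typed G' (mF + mY) (eF + eY) (C Y) T].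

Lemma frame_id G m e T : frame id 0 G m e T G m e T.
Proof.
exists cempty, 0, 0; split=> // [y | Y GY mY eY G' HY _ sG' pG'].
  by rewrite addn0.
apply: typed_conv HY _ _ _ sG' => // y.
by rewrite perm_sym (permPl (pG' y)) addn0.
Qed.

Lemma frame_comp C1 C2 k1 k2 G m e T G1 m1 e1 L1 GX mX eX L :
  ctx_sorted G1 -> frame C1 k1 G m e T G1 m1 e1 L1 -> frame C2 k2 G1 m1 e1 L1 GX mX eX L ->
  frame (C1 \o C2) (k1 + k2) G m e T GX mX eX L.
Proof.
move=> sG1 [F1 [mF1 [eF1 [-> -> pG plug1]]]] [F2 [mF2 [eF2 [-> -> pG1 plug2]]]].
exists (fun y => F1 y ++ F2 (y + k1)), (mF1 + mF2), (eF1 + eF2).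
split; [lia | lia | move=> y | move=> Y GY mY eY G' HY agree sG' pG'].
  apply/permP => p; move/permP: (pG y) => /(_ p) ->; move/permP: (pG1 (y + k1)) => /(_ p).
  by rewrite !count_cat addnA => ->; rewrite addnA.
pose GY1 y := sort ltype_le (F2 y ++ GY (y + k2)).
have sGY1 : ctx_sorted GY1 by move=> y; apply: sort_sorted ltype_le_total _.
have HY1 : typed GY1 (mF2 + mY) (eF2 + eY) (C2 Y) L1.
  apply: plug2 HY _ sGY1 _ => [y lt_yk2 | y]; first by apply: agree; lia.
  by rewrite perm_sort.
rewrite -!addnA; apply: plug1 HY1 _ sG' _ => [y lt_yk1 | y].
  apply: (sorted_eq ltype_le_trans ltype_le_anti (sGY1 y) (sG1 y)).
  by rewrite perm_sort perm_sym (permPl (pG1 y)) agree //; lia.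
apply/permP => p; move/permP: (pG' y) => /(_ p) ->.
by rewrite /GY1 !count_cat count_sort count_cat !addnA.
Qed.

Lemma frame_appl s G m e T X : typed G m e (App X s) T ->
  exists G1 m1 e1 L, typed G1 m1 e1 X L /\ frame (App^~ s) 0 G m e T G1 m1 e1 L.
Proof.
move=> /inv_app [G1 [D [m1 [e1 [m2 [e2 [M [H1 H2 -> -> ->]]]]]]]].
exists G1, m1, e1, (tarr M T); split=> //; exists D, (m2 + 1), e2.
split; [lia | lia | move=> y | move=> Y GY mY eY G' HY _ sG' pG'].
  by apply/permP => p; rewrite count_cunion count_cat addn0 addnC.
apply: typed_conv (ty_app HY H2) _ _ _ sG'; [lia | lia | move=> y].
apply/permP => p; move/permP: (pG' y) => /(_ p) ->.
by rewrite count_cunion count_cat addn0 addnC.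
Qed.

Lemma frame_esl s G m e T X : typed G m e (ES X s) T ->
  exists G1 m1 e1, typed G1 m1 e1 X T /\ frame (ES^~ s) 1 G m e T G1 m1 e1 T.
Proof.
move=> /inv_es [G1 [D [m1 [e1 [m2 [e2 [H1 H2 -> -> ->]]]]]]].
exists G1, m1, e1; split=> //; exists D, m2, e2.
split; [lia | lia | move=> y | move=> Y GY mY eY G' HY agree sG' pG'].
  by apply/permP => p; rewrite count_cunion count_cat addn1 addnC.
rewrite -(agree 0) // in H2.
apply: typed_conv (ty_es HY H2) _ _ _ sG'; [lia | lia | move=> y].
apply/permP => p; move/permP: (pG' y) => /(_ p) ->.
by rewrite count_cunion count_cat addn1 addnC.
Qed.

Lemma frame_esr a G m e X : is_answer a -> typed G m e (ES a X) tn ->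
  exists G1 m1 e1, typed G1 m1 e1 X tn /\ frame (ES a) 0 G m e tn G1 m1 e1 tn.
Proof.
move=> ans_a /inv_es [Ga [D [ma [ea [m2 [e2 [Ha H2 -> -> ->]]]]]]].
have Ga0 := typed_answer_tn_cempty ans_a Ha; subst Ga; have HX := inv_mtyped_single H2.
exists D, m2, e2; split=> //; exists cempty, ma, ea.
split; [lia | lia | move=> y | move=> Y GY mY eY G' HY _ sG' pG'].
  by rewrite addn0 /cunion /munion perm_sort.
have HM : mtyped (cunion GY cempty) (mY + 0) (eY + 0) Y (munion (cempty 0) [:: tn]).
  exact: mty_cons HY (mty_nil Y).
apply: typed_conv (ty_es Ha HM) _ _ _ sG'; [lia | lia | move=> y].
apply/permP => p; move/permP: (pG' y) => /(_ p) ->.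
by rewrite !count_cunion /= add0n !addn0.
Qed.

Definition splits_at (T : ltype) (C : term -> term) (k : nat) : Prop :=
  forall X G m e, typed G m e (C X) T ->
    exists GX mX eX L, typed GX mX eX X L /\ frame C k G m e T GX mX eX L.

Lemma splits_plugN N T : splits_at T (plugN N) (bindN N).
Proof.
elim: N T => [|N IH s|N IH s] T X G m e /=.
- by move=> HX; exists G, m, e, T; split=> //; apply: frame_id.
- case/frame_appl => G1 [m1 [e1 [L1 [H1 F1]]]].
  have [GX [mX [eX [L [HX FX]]]]] := IH _ _ _ _ _ H1.
  by exists GX, mX, eX, L; split=> //; apply: frame_comp (typed_sorted H1) F1 FX.
- case/frame_esl => G1 [m1 [e1 [H1 F1]]].
  have [GX [mX [eX [L [HX FX]]]]] := IH _ _ _ _ _ H1.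
  by exists GX, mX, eX, L; split=> //; apply: frame_comp (typed_sorted H1) F1 FX.
Qed.

Lemma frame_plugA A X G m e : wfA A -> typed G m e (plugA A X) tn ->
  exists GX mX eX, typed GX mX eX X tn /\ frame (plugA A) (bindA A) G m e tn GX mX eX tn.
Proof.
elim: A G m e => [|a A IH|A IH s] G m e /=.
- by move=> _ HX; exists G, m, e; split=> //; apply: frame_id.
- case/andP=> ans_a wfA_A /(frame_esr ans_a) [G1 [m1 [e1 [H1 F1]]]].
  have [GX [mX [eX [HX FX]]]] := IH _ _ _ wfA_A H1.
  by exists GX, mX, eX; split=> //; apply: frame_comp (typed_sorted H1) F1 FX.
- move=> wfA_A /frame_esl [G1 [m1 [e1 [H1 F1]]]].
  have [GX [mX [eX [HX FX]]]] := IH _ _ _ wfA_A H1.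
  by exists GX, mX, eX; split=> //; apply: frame_comp (typed_sorted H1) F1 FX.
Qed.

Lemma splits_plugY A N : wfA A -> splits_at tn (plugY A N) (bindY A N).
Proof.
move=> wfA_A X G m e /(frame_plugA wfA_A) [G1 [m1 [e1 [H1 F1]]]].
have [GX [mX [eX [L [HX FX]]]]] := splits_plugN H1.
by exists GX, mX, eX, L; split=> //; apply: frame_comp (typed_sorted H1) F1 FX.
Qed.

Lemma frame_reduce C k G m e T GX mX eX L Y mY eY dm de :
  ctx_sorted G -> frame C k G m e T GX mX eX L ->
  mX = mY + dm -> eX = eY + de -> typed GX mY eY Y L ->
  exists m' e', [/\ m = m' + dm, e = e' + de & typed G m' e' (C Y) T].
Proof.
move=> sG [F [mF [eF [-> -> pG plug]]]] -> -> HY.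
by exists (mF + mY), (eF + eY); rewrite !addnA; split=> //; apply: plug HY _ sG pG.
Qed.

Definition subject_reduction (L : ltype) (R : term -> term -> Prop) (dm de : nat) : Prop :=
  forall G m e t u, typed G m e t L -> R t u ->
    exists m' e', [/\ m = m' + dm, e = e' + de & typed G m' e' u L].

Lemma typed_distant_beta S b w G m e L :
  typed G m e (App (plugS S (Lam b)) w) L ->
  exists m', m = m'.+1 /\ typed G m' e (plugS S (ES b (lift (size S) 0 w))) L.
Proof.
elim: S G m e w => [|u S IH] G m e w /inv_app [G1 [D [m1 [e1 [m2 [e2 [M [H1 H2 -> -> ->]]]]]]]].
  have [Gb [Hb -> eM]] := inv_lam_tarr H1; subst M.
  by exists (m1 + m2); rewrite addn1 lift0; split=> //; apply: ty_es Hb H2.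
have [G2 [D2 [m3 [e3 [m4 [e4 [H3 H4 -> -> ->]]]]]]] := inv_es H1.
have [m' [eq_m' H']] := IH _ _ _ _ (ty_app H3 (mtyped_lift 1 0 H2)).
rewrite liftD addn1 in H'.
have G20 : cunion G2 (cshift 1 0 D) 0 = G2 0.
  by rewrite /cunion /cshift /= /munion cats0 (sorted_sort ltype_le_trans (typed_sorted H3 0)).
rewrite -G20 in H4.
exists (m' + m4); split; first lia.
apply: typed_conv (ty_es H' H4) _ _ _ _; [lia | lia | move=> y | move=> y; apply: munion_sorted].
apply/permP => p; rewrite !count_cunion /ctail /cshift /= subn1 /=; lia.
Qed.

Lemma subject_reduction_root_m L : subject_reduction L root_m 1 0.
Proof.
move=> G m e t u Ht [S [b [w [et eu]]]]; subst t u.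
have [m' [-> Hu]] := typed_distant_beta Ht.
by exists m', e; rewrite addn1 addn0.
Qed.

Lemma typed_linear_subst T C k w G m e : splits_at T C k ->
  typed G m e (ES (C (Var k)) w) T ->
  exists e', e = e'.+1 /\ typed G m e' (ES (C (lift k.+1 0 w)) w) T.
Proof.
move=> splitC /inv_es [G1 [D [m1 [e1 [m2 [e2 [HC Hw -> -> ->]]]]]]].
have [GX [mX [eX [L [HX [F [mF [eF [-> -> pG1 plug]]]]]]]]] := splitC _ _ _ _ HC.
have [eGX -> ->] := inv_var HX; subst GX.
(* [Var k] is typed by (ax), so the multiset type of [w] contains its type [L]. *)
have pw : perm_eq (munion (G1 0) [:: tn]) (L :: (F 0 ++ [:: tn])).
  apply/permP => p; move/permP: (pG1 0) => /(_ p).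
  rewrite /munion count_sort add0n /csing eqxx /= !count_cat /=; lia.
have [GL [mL [eL [D' [m' [e' [HL HD' pD -> ->]]]]]]] := mtyped_extract Hw pw.
pose G1' y := sort ltype_le (F y ++ cshift k.+1 0 GL (y + k)).
have HC' : typed G1' (mF + mL) (eF + eL) (C (lift k.+1 0 w)) T.
  apply: plug (typed_lift k.+1 0 HL) _ _ _ => [y lt_yk | y | y].
  - by rewrite /cshift /csing ltn0 add0n ltnS ltnW // (ltn_eqF lt_yk).
  - exact: sort_sorted ltype_le_total _.
  - by rewrite perm_sort.
have G1'0 : munion (G1' 0) [:: tn] = sort ltype_le (F 0 ++ [:: tn]).
  apply: sort_perm_eq; apply/permP => p.
  by rewrite /G1' !count_cat count_sort count_cat /cshift ltn0 add0n ltnSn /= addn0.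
rewrite -G1'0 in HD'.
exists (eF + eL + e'); split; first lia.
apply: typed_conv (ty_es HC' HD') _ _ _ _; [lia | lia | move=> y | move=> y; apply: munion_sorted].
apply/permP => p; move/permP: (pG1 y.+1) => /(_ p); move/permP: (pD y) => /(_ p).
rewrite !count_cunion /ctail /G1' count_sort !count_cat /csing /cshift /=.
have -> : (y.+1 + k == k) = false by apply/eqP; lia.
have -> : (y.+1 + k < k.+1) = false by lia.
have -> : y.+1 + k - k.+1 = y by lia.
by rewrite addn0; lia.
Qed.

Lemma subject_reduction_root_eN L : subject_reduction L root_eN 0 1.
Proof.
move=> G m e t u Ht [N [w [et eu]]]; subst t u.
have [e' [-> Hu]] := typed_linear_subst (@splits_plugN N L) Ht.
by exists m, e'; rewrite addn0 addn1.
Qed.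

Lemma subject_reduction_root_eY : subject_reduction tn root_eY 0 1.
Proof.
move=> G m e t u Ht [A [N [w [wfA_A [et eu]]]]]; subst t u.
have [e' [-> Hu]] := typed_linear_subst (@splits_plugY A N wfA_A) Ht.
by exists m, e'; rewrite addn0 addn1.
Qed.

(* [ym], [yeYN] and [yeAY] unfold to [Yclosure root_m], [Yclosure root_eN] and
   [Aclosure root_eY]. *)
Definition Yclosure (R : term -> term -> Prop) (t u : term) : Prop :=
  exists (A : actx) (N : nctx) (t0 u0 : term),
    wfA A /\ R t0 u0 /\ t = plugY A N t0 /\ u = plugY A N u0.

Definition Aclosure (R : term -> term -> Prop) (t u : term) : Prop :=
  exists (A : actx) (t0 u0 : term),
    wfA A /\ R t0 u0 /\ t = plugA A t0 /\ u = plugA A u0.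

Lemma subject_reduction_Yclosure R dm de :
  (forall L, subject_reduction L R dm de) -> subject_reduction tn (Yclosure R) dm de.
Proof.
move=> srR G m e t u Ht [A [N [t0 [u0 [wfA_A [Rtu [et eu]]]]]]]; subst t u.
have [GX [mX [eX [L [HX FX]]]]] := @splits_plugY A N wfA_A _ _ _ _ Ht.
have [mY [eY [emX eeX HY]]] := srR L _ _ _ _ _ HX Rtu.
exact: frame_reduce (typed_sorted Ht) FX emX eeX HY.
Qed.

Lemma subject_reduction_Aclosure R dm de :
  subject_reduction tn R dm de -> subject_reduction tn (Aclosure R) dm de.
Proof.
move=> srR G m e t u Ht [A [t0 [u0 [wfA_A [Rtu [et eu]]]]]]; subst t u.
have [GX [mX [eX [HX FX]]]] := frame_plugA wfA_A Ht.
have [mY [eY [emX eeX HY]]] := srR _ _ _ _ _ HX Rtu.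
exact: frame_reduce (typed_sorted Ht) FX emX eeX HY.
Qed.

Theorem proposition12p4 :
  forall (G : ctx) (m e : nat) (t u : term),
    typed G m e t tn ->
    (ym t u -> 1 <= m /\ typed G (m - 1) e u tn) /\
    (yeAY t u \/ yeYN t u -> 1 <= e /\ typed G m (e - 1) u tn).
Proof.
move=> G m e t u Ht; split=> [tu | [tu | tu]].
- have [m' [e' [-> -> Hu]]] := subject_reduction_Yclosure subject_reduction_root_m Ht tu.
  by rewrite addn1 subn1 addn0.
- have [m' [e' [-> -> Hu]]] := subject_reduction_Aclosure subject_reduction_root_eY Ht tu.
  by rewrite addn1 subn1 addn0.
- have [m' [e' [-> -> Hu]]] := subject_reduction_Yclosure subject_reduction_root_eN Ht tu.
  by rewrite addn1 subn1 addn0.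
Qed.
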